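(* Let $r,K,\mu$ satisfy Assumption 1. Let $\mathcal D=(0,1)\times(0,K)$, $Z_w=\{f_w=0\}\cap\mathcal D$, $Z_w^-=\{f_w<0\}\cap\mathcal D$, $Z_m=\{f_m=0\}\cap\mathcal D$, $Z_m^-=\{f_m<0\}\cap\mathcal D$, $\mathcal D_l=\{(w,m)\in\mathcal D: w\le w^*, m\ge m^*\}$ and $\mathcal D_r=\{(w,m)\in\mathcal D: w\ge w^*, m\le m^*\}$. Then $Z_m\cup Z_w\subset\mathcal D_l\cup\mathcal D_r$, $Z_w^-\cap\mathcal D_l\subset Z_m^-$, and $Z_m^-\cap\mathcal D_r\subset Z_w^-$.
   Context: Assumption 1: $r\in(1,\infty)$, $\mu\in\left(0,\min\left(\frac r2,1-\frac1r,1-K,K\right)\right)$, $K\in\left(0,\min\left(1,\frac{r}{r-1}\left(1-\frac{\mu}{1-\mu}\right)\right)\right)$. $f_w(w,m):=w(1-(w+m))+\mu(m-w)$, $f_m(w,m):=rm\left(1-\frac{w+m}{K}\right)+\mu(w-m)$; $(w^*,m^* )$ is the unique solution in $(0,1)\times(0,K)$ of $f_w=f_m=0$. *)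

From Stdlib Require Import Reals.
Open Scope R_scope.

Definition f_w (mu w m : R) : R := w * (1 - (w + m)) + mu * (m - w).
Definition f_m (r K mu w m : R) : R := r * m * (1 - (w + m) / K) + mu * (w - m).

Definition assumption1 (r K mu : R) : Prop :=
  1 < r /\
  0 < mu /\ mu < r / 2 /\ mu < 1 - 1 / r /\ mu < 1 - K /\ mu < K /\
  0 < K /\ K < 1 /\ K < r / (r - 1) * (1 - mu / (1 - mu)).

Definition inD (K w m : R) : Prop := 0 < w < 1 /\ 0 < m < K.

Definition is_unique_eq (r K mu ws ms : R) : Prop :=
  inD K ws ms /\ f_w mu ws ms = 0 /\ f_m r K mu ws ms = 0 /\
  (forall w m, inD K w m -> f_w mu w m = 0 -> f_m r K mu w m = 0 ->
     w = ws /\ m = ms).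

Definition inDl (K ws ms w m : R) : Prop := inD K w m /\ w <= ws /\ ms <= m.
Definition inDr (K ws ms w m : R) : Prop := inD K w m /\ ws <= w /\ m <= ms.

From Stdlib Require Import Reals Lra Ranalysis5.
Open Scope R_scope.

(* Both right-hand sides are instances of one logistic-growth-with-migration
   function F x y = a x (c - x - y) + b (y - x), where x is the population
   whose equation it is: f_w with x = w, and K f_m with x = m.  On the
   positive quadrant the nullcline {F = 0} is the graph of a decreasing
   function of x as soon as 2b < ac, which puts each nullcline into the
   north-west and south-east quadrants around the equilibrium.  For the
   inclusions of the negative sets, parametrise the nullcline of the other
   equation, G y x = 0, by y.  Along it F cannot vanish between the
   equilibrium and the point where the nullcline hits x = 0 (this would be a
   second equilibrium), and F(0, y) = b y > 0 there, so F > 0 along that arc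
   by the intermediate value theorem.  A point with x <= xs, y >= ys and
   G >= 0 lies to the left of this arc, and F, being concave in x with
   F(0, y) > 0, is nonnegative there.  Taking (F, G) = (f_w, K f_m) or
   (K f_m, f_w) gives the two inclusions of negative sets. *)

Definition logistic_migration (a b c x y : R) : R :=
  a * x * (c - x - y) + b * (y - x).

(* The value of y on the nullcline {logistic_migration a b c x y = 0} above x. *)
Definition nullcline_partner (a b c x : R) : R :=
  x * (a * c - b - a * x) / (a * x - b).

Lemma f_w_logistic mu w m : f_w mu w m = logistic_migration 1 mu 1 w m.
Proof. unfold f_w, logistic_migration; ring. Qed.

Lemma f_m_logistic r K mu w m :
  0 < K -> K * f_m r K mu w m = logistic_migration r (mu * K) K m w.
Proof. intros HK; unfold f_m, logistic_migration; field; lra. Qed.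

Lemma f_m_zero_iff r K mu w m : 0 < K ->
  f_m r K mu w m = 0 <-> logistic_migration r (mu * K) K m w = 0.
Proof.
  intros HK; rewrite <- f_m_logistic by assumption.
  split; intros E; [rewrite E; ring | nra].
Qed.

Lemma f_m_neg_iff r K mu w m : 0 < K ->
  f_m r K mu w m < 0 <-> logistic_migration r (mu * K) K m w < 0.
Proof. intros HK; rewrite <- f_m_logistic by assumption; split; intros; nra. Qed.

Lemma logistic_migration_pos_of_small a b c x y :
  0 < x -> 0 <= y -> 2 * b < a * c -> a * x <= b ->
  0 < logistic_migration a b c x y.
Proof.
  intros Hx Hy Hc Hax; unfold logistic_migration.
  assert (0 < x * (a * c - b - a * x)) by (apply Rmult_lt_0_compat; lra).
  assert (0 <= y * (b - a * x)) by (apply Rmult_le_pos; lra).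
  nra.
Qed.

Lemma logistic_migration_root_gt a b c x y :
  0 < x -> 0 <= y -> 2 * b < a * c -> logistic_migration a b c x y = 0 ->
  b < a * x.
Proof.
  intros Hx Hy Hc E; destruct (Rlt_le_dec b (a * x)) as [|Hax]; [assumption|].
  pose proof (logistic_migration_pos_of_small a b c x y Hx Hy Hc Hax); lra.
Qed.

Lemma logistic_migration_nullcline_antitone a b c x y xs ys :
  0 <= b -> 2 * b <= a * c -> b < a * x -> b < a * xs ->
  logistic_migration a b c x y = 0 -> logistic_migration a b c xs ys = 0 ->
  x <= xs -> ys <= y.
Proof.
  unfold logistic_migration; intros Hb Hc Hx Hxs E Es Hle.
  set (t := a * x - b); set (ts := a * xs - b).
  (* On the nullcline y t = x (ac - 2b - t), whence: *)
  assert (Id : (y - ys) * (t * ts) = (xs - x) * (t * ts + b * (a * c - 2 * b))).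
  { transitivity (ts * (y * t) - t * (ys * ts)); [ring|].
    replace (y * t) with (x * (a * c - 2 * b - t)) by (unfold t in *; lra).
    replace (ys * ts) with (xs * (a * c - 2 * b - ts)) by (unfold ts in *; lra).
    unfold t, ts; ring. }
  assert (Htts : 0 < t * ts) by (apply Rmult_lt_0_compat; unfold t, ts; lra).
  assert (0 <= (xs - x) * (t * ts + b * (a * c - 2 * b))).
  { apply Rmult_le_pos; [lra|]. assert (0 <= b * (a * c - 2 * b)) by nra; lra. }
  nra.
Qed.

Lemma logistic_migration_nullcline_quadrants a b c x y xs ys :
  0 < b -> 2 * b < a * c -> 0 < x -> 0 < y -> 0 < xs -> 0 < ys ->
  logistic_migration a b c x y = 0 -> logistic_migration a b c xs ys = 0 ->
  (x <= xs /\ ys <= y) \/ (xs <= x /\ y <= ys).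
Proof.
  intros Hb Hc Hx Hy Hxs Hys E Es.
  pose proof (logistic_migration_root_gt a b c x y Hx (Rlt_le _ _ Hy) Hc E).
  pose proof (logistic_migration_root_gt a b c xs ys Hxs (Rlt_le _ _ Hys) Hc Es).
  destruct (Rle_lt_dec x xs) as [Hle|Hlt]; [left|right]; split; try lra.
  - apply (logistic_migration_nullcline_antitone a b c x y xs ys); lra.
  - apply (logistic_migration_nullcline_antitone a b c xs ys x y); lra.
Qed.

Lemma logistic_migration_partner a b c x :
  a * x - b <> 0 -> logistic_migration a b c x (nullcline_partner a b c x) = 0.
Proof. intros; unfold logistic_migration, nullcline_partner; field; assumption. Qed.

Lemma nullcline_partner_root a b c x y :
  b < a * x -> logistic_migration a b c x y = 0 -> y = nullcline_partner a b c x.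
Proof.
  unfold logistic_migration, nullcline_partner; intros Hx E.
  apply (Rmult_eq_reg_r (a * x - b)); [field_simplify; lra | lra].
Qed.

Lemma le_nullcline_partner a b c x y :
  b < a * x -> 0 <= logistic_migration a b c x y -> y <= nullcline_partner a b c x.
Proof.
  unfold logistic_migration, nullcline_partner; intros Hx E.
  apply (Rmult_le_reg_r (a * x - b)); [lra|].
  field_simplify; lra.
Qed.

(* Concavity in x, with F(0, y) = b y >= 0. *)
Lemma logistic_migration_nonneg_below a b c x h y :
  0 <= a -> 0 <= b -> 0 <= y -> 0 <= x <= h ->
  0 <= logistic_migration a b c h y -> 0 <= logistic_migration a b c x y.
Proof.
  intros Ha Hb Hy [Hx Hxh] Hh.
  destruct (Rle_lt_or_eq_dec _ _ Hx) as [Hx0|<-];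
    [|unfold logistic_migration; nra].
  assert (Id : h * logistic_migration a b c x y =
     (h - x) * (b * y) + x * logistic_migration a b c h y + a * h * x * (h - x))
    by (unfold logistic_migration; ring).
  assert (0 <= (h - x) * (b * y)) by (apply Rmult_le_pos; nra).
  assert (0 <= x * logistic_migration a b c h y) by (apply Rmult_le_pos; lra).
  assert (0 <= a * h * x * (h - x)) by
    (apply Rmult_le_pos; [apply Rmult_le_pos; [apply Rmult_le_pos|]|]; lra).
  nra.
Qed.

Lemma pos_on_interval_of_no_root (f : R -> R) lo hi :
  (forall x, lo <= x <= hi -> continuity_pt f x) -> 0 < f hi ->
  (forall z, lo < z < hi -> f z <> 0) -> forall x, lo < x < hi -> 0 < f x.
Proof.
  intros Hcont Hhi Hno x Hx.
  destruct (Rlt_le_dec 0 (f x)) as [|Hle]; [assumption|exfalso].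
  destruct (Rle_lt_or_eq_dec _ _ Hle) as [Hneg|Hzero]; [|exact (Hno x Hx Hzero)].
  assert (Hcont' : forall y, x <= y <= hi -> continuity_pt f y)
    by (intros y Hy; apply Hcont; lra).
  destruct (IVT_interv f x hi Hcont' (proj2 Hx) Hneg Hhi)
    as [z [Hz Ez]].
  destruct (Rle_lt_or_eq_dec _ _ (proj2 Hz)) as [Hzhi|Hzhi]; [|subst z; lra].
  exact (Hno z ltac:(lra) Ez).
Qed.

Section NullclineCrossing.

Variables a b c a' b' c' xs ys : R.
Hypotheses (Ha : 0 < a) (Hb : 0 < b) (Ha' : 0 < a') (Hb' : 0 < b')
  (Hc' : 2 * b' < a' * c').
Hypotheses (Hxs : 0 < xs < c) (Hys : 0 < ys < c').
Hypotheses (HF : logistic_migration a b c xs ys = 0)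
  (HG : logistic_migration a' b' c' ys xs = 0).
Hypothesis Huniq : forall x y, 0 < x < c -> 0 < y < c' ->
  logistic_migration a b c x y = 0 -> logistic_migration a' b' c' y x = 0 ->
  x = xs /\ y = ys.

Local Notation F := (logistic_migration a b c).
Local Notation G := (logistic_migration a' b' c').
Local Notation h := (nullcline_partner a' b' c').

(* The G-nullcline meets x = 0 at y = c' - b'/a'. *)
Let hit_axis : a' * (c' - b' / a') = a' * c' - b'.
Proof. field; lra. Qed.

Let equilibrium_root_gt : b' < a' * ys.
Proof. apply (logistic_migration_root_gt a' b' c' ys xs); lra. Qed.

Let ys_below_axis : ys < c' - b' / a'.
Proof.
  apply (Rmult_lt_reg_l a'); [lra|]; rewrite hit_axis.
  unfold logistic_migration in HG.
  assert (0 < xs * (a' * ys - b')) by (apply Rmult_lt_0_compat; lra).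
  assert (0 < ys * (a' * c' - b' - a' * ys)) by lra.
  nra.
Qed.

Lemma F_pos_along_G_nullcline y :
  ys < y < c' - b' / a' -> 0 < F (h y) y.
Proof.
  apply pos_on_interval_of_no_root with (f := fun y => F (h y) y).
  - intros z Hz; assert (a' * z - b' <> 0) by nra.
    unfold logistic_migration, nullcline_partner; reg.
  - replace (h (c' - b' / a')) with 0
      by (unfold nullcline_partner; rewrite hit_axis; field; lra).
    unfold logistic_migration. assert (0 < b / a') by (apply Rdiv_lt_0_compat; lra).
    nra.
  - intros z Hz Ez.
    assert (Hz_gt : b' < a' * z) by nra.
    assert (Gz : G z (h z) = 0) by (apply logistic_migration_partner; lra).
    assert (h z <= xs) by
      (apply (logistic_migration_nullcline_antitone a' b' c' ys xs z (h z)); lra).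
    assert (0 < h z).
    { unfold nullcline_partner; apply Rdiv_lt_0_compat; [|lra].
      apply Rmult_lt_0_compat; nra. }
    assert (0 < b' / a') by (apply Rdiv_lt_0_compat; lra).
    destruct (Huniq (h z) z ltac:(lra) ltac:(lra) Ez Gz); lra.
Qed.

Lemma nullcline_crossing x y :
  0 < x -> x <= xs -> ys <= y -> F x y < 0 -> G y x < 0.
Proof.
  intros Hx Hxxs Hyys HFneg.
  destruct (Rlt_le_dec (G y x) 0) as [|HGnn]; [assumption|exfalso].
  assert (Hy_gt : b' < a' * y) by nra.
  assert (Hxh : x <= h y) by (apply le_nullcline_partner; assumption).
  assert (HFh : 0 <= F (h y) y).
  { destruct (Rle_lt_or_eq_dec _ _ Hyys) as [Hlt|<-].
    - apply Rlt_le, F_pos_along_G_nullcline; split; [assumption|].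
      apply (Rmult_lt_reg_l a'); [lra|]; rewrite hit_axis.
      unfold logistic_migration in HGnn.
      assert (0 < x * (a' * y - b')) by (apply Rmult_lt_0_compat; lra).
      nra.
    - rewrite <- (nullcline_partner_root a' b' c' ys xs); lra. }
  assert (0 <= F x y)
    by (apply (logistic_migration_nonneg_below a b c x (h y) y); lra).
  lra.
Qed.

End NullclineCrossing.

Theorem mainTheorem19 (r K mu ws ms : R) :
  assumption1 r K mu ->
  is_unique_eq r K mu ws ms ->
  (forall w m, inD K w m -> (f_m r K mu w m = 0 \/ f_w mu w m = 0) ->
     inDl K ws ms w m \/ inDr K ws ms w m) /\
  (forall w m, inD K w m -> f_w mu w m < 0 -> inDl K ws ms w m ->
     f_m r K mu w m < 0) /\
  (forall w m, inD K w m -> f_m r K mu w m < 0 -> inDr K ws ms w m ->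
     f_w mu w m < 0).
Proof.
  intros (Hr & Hmu & Hmur & _ & HmuK1 & HmuK & HK0 & HK1 & _)
         ([Hws Hms] & Efw & Efm & Huniq).
  unfold inDl, inDr, inD in *.
  rewrite f_w_logistic in Efw; rewrite f_m_zero_iff in Efm by lra.
  assert (HmuKr : 2 * (mu * K) < r * K) by nra.
  split; [|split].
  - intros w m [Hw Hm] [E|E];
      [rewrite f_m_zero_iff in E by lra | rewrite f_w_logistic in E].
    + destruct (logistic_migration_nullcline_quadrants r (mu * K) K m w ms ws)
        as [[]|[]]; nra.
    + destruct (logistic_migration_nullcline_quadrants 1 mu 1 w m ws ms)
        as [[]|[]]; lra.
  - intros w m [Hw Hm] Hneg [_ [Hwws Hmms]].
    rewrite f_w_logistic in Hneg; apply f_m_neg_iff; [lra|].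
    apply (nullcline_crossing 1 mu 1 r (mu * K) K ws ms); try nra.
    intros x y Hx Hy E1 E2; apply Huniq;
      [lra | rewrite f_w_logistic | rewrite f_m_zero_iff by lra]; assumption.
  - intros w m [Hw Hm] Hneg [_ [Hwws Hmms]].
    rewrite f_m_neg_iff in Hneg by lra; rewrite f_w_logistic.
    apply (nullcline_crossing r (mu * K) K 1 mu 1 ms ws); try nra.
    intros x y Hx Hy E1 E2.
    enough (y = ws /\ x = ms) by tauto.
    apply Huniq; [lra | rewrite f_w_logistic | rewrite f_m_zero_iff by lra];
      assumption.
Qed.
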